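(* Let $q$ be an odd prime power, $P\in\mathbb{F}_q[T]$ monic irreducible with $\chi_q(P)=-1$, and $h=(h_1,\dots,h_k)$ a $k$-tuple of pairwise distinct polynomials. Then $\delta_{q,h}(P)=1-\frac{\eta}{|P|+1}$ for some real $\eta$ with $1\le\eta\le k$; moreover $\eta=1$ when $h$ is the $1$-tuple $(0)$, and $\eta=k$ when $P\nmid\Delta_h$.
   Context: $|P|=q^{\deg P}$; $\chi_q(f)=0$ if $f(0)=0$, $1$ if $f(0)$ is a nonzero square in $\mathbb{F}_q$, $-1$ otherwise. $\mathcal{A}_q(P^\nu)=\{A^2+TB^2\bmod P^\nu:A,B\in\mathbb{F}_q[T]\}$, $\mathcal{A}_{q,h}(P^\nu)=\{f\bmod P^\nu:f+h_i\in\mathcal{A}_q(P^\nu)\ \forall i\}$, $\delta_{q,h}(P)=\lim_{\nu\to\infty}|P|^{-\nu}\#\mathcal{A}_{q,h}(P^\nu)$. $\Delta_h=\prod_{i\ne j}(h_i-h_j)$ (empty product $=1$). *)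

From HB Require Import structures.
From mathcomp Require Import all_boot all_order all_algebra all_field.
From Stdlib Require Import ClassicalEpsilon.
Set Implicit Arguments. Unset Strict Implicit. Unset Printing Implicit Defensive.
Import GRing.Theory.
Local Open Scope ring_scope.

Definition asbool (P : Prop) : bool :=
  if excluded_middle_informative P then true else false.

Definition chiq (F : finFieldType) (f : {poly F}) : int :=
  if f.[0] == 0 then 0
  else if [exists y : F, y ^+ 2 == f.[0]] then 1 else -1.

Definition inAq (F : finFieldType) (M f : {poly F}) : Prop :=
  exists A B : {poly F}, M %| (f - (A ^+ 2 + 'X * B ^+ 2)).

Definition inAqh (F : finFieldType) (h : seq {poly F}) (M f : {poly F}) : Prop :=
  forall hi, hi \in h -> inAq M (f + hi).

(* # A_{q,h}(P^nu): residues mod P^nu are represented by the polynomials of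
   degree < nu * deg P, i.e. coefficient tuples of length nu * deg P *)
Definition countAqh (F : finFieldType) (h : seq {poly F}) (P : {poly F}) (nu : nat) : nat :=
  #|[set t : (((size P).-1 * nu)%N).-tuple F | asbool (inAqh h (P ^+ nu) (Poly t))]|.

Definition normP (F : finFieldType) (P : {poly F}) : nat := (#|F| ^ (size P).-1)%N.

Definition Deltah (F : finFieldType) (h : seq {poly F}) : {poly F} :=
  \prod_(i < size h) \prod_(j < size h | i != j) (h`_i - h`_j).

From mathcomp Require Import all_boot all_order all_algebra all_field zify ring.
From Stdlib Require Import ClassicalEpsilon.
Set Implicit Arguments. Unset Strict Implicit. Unset Printing Implicit Defensive.
Import GRing.Theory.
Local Open Scope ring_scope.

(* Since chi_q(P) = -1, -T is not a square modulo P: its norm from F_q[T]/(P) down to F_q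
   is P(0). Hence A^2 + T B^2 is anisotropic at P and has even P-adic valuation, while
   for odd q Hensel's lemma shows that every P-adic unit is of this form. So f lies in
   A_q(P^nu) iff f does not have odd valuation below nu. The residues mod P^nu with odd
   valuation below nu form a proportion c_nu / |P|^nu tending to 1/(|P|+1); the residues
   for which some f + h_i is bad are between 1 and k times as many (exactly k times when
   the h_i are pairwise incongruent mod P), and their proportion is nondecreasing in nu,
   hence converges. *)

(** * Squares in finite fields *)

Section FiniteFieldSquares.
Variable K : finFieldType.

Let squares := [set y ^+ 2 | y : K].

(* Squaring is at most two-to-one, and one-to-one above 0. *)
Lemma card_squares : (#|K| < 2 * #|squares|)%N.
Proof.
have sq0 : (0 : K) \in squares by apply/imsetP; exists 0; rewrite ?expr0n.
have -> : #|K| = (\sum_(y : K) 1)%N by rewrite sum1_card.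
rewrite (partition_big (fun y : K => y ^+ 2) (mem squares)) /=; last first.
  by move=> y _; apply: imset_f.
rewrite (bigD1 0) //= (cardsD1 0 squares) sq0 mulnDr muln1.
have -> : (\sum_(y : K | y ^+ 2 == 0%R) 1 = 1)%N.
  by rewrite (eq_bigl (pred1 0)) ?big_pred1_eq // => y; rewrite /= sqrf_eq0.
have -> : #|squares :\ 0| = (\sum_(z in squares | z != 0%R) 1)%N.
  by rewrite sum1_card; apply: eq_card => z; rewrite !inE andbC.
rewrite add1n !ltnS big_distrr leq_sum //= => _ /andP[/imsetP[y _ ->] _].
rewrite muln1 sum1_card; apply: (leq_trans (subset_leq_card (B := [set y; - y] : {set K}) _)).
  by apply/subsetP => x /eqP/eqP; rewrite eqf_sqr !inE.
by rewrite cards2; case: (_ != _).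
Qed.

(* Pigeonhole: the squares and the [u - t * x], [x] a square, both fill more than half of K. *)
Lemma sqr_add_mul_sqr (t u : K) : t != 0 -> exists a b : K, a ^+ 2 + t * b ^+ 2 = u.
Proof.
move=> t0; pose shifted := [set u - t * x | x in squares].
have card_shifted : #|shifted| = #|squares|.
  by apply: card_imset => x y /= /addrI /oppr_inj /(mulfI t0).
have : ~~ [disjoint squares & shifted].
  apply: contraTN card_squares => /disjoint_setI0 dis.
  have := cardsU squares shifted; rewrite dis cards0 subn0 card_shifted addnn -mul2n => <-.
  by rewrite -leqNgt max_card.
case/pred0Pn => _ /andP[/imsetP[a _ ->] /imsetP[_ /imsetP[b _ ->] ab]].
by exists a, b; rewrite ab subrK.
Qed.

End FiniteFieldSquares.

(** * The residue field F[T]/(P) *)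

Lemma pnat_pchar_card (F : finFieldType) : [pchar F].-nat #|F|.
Proof.
have [p p_pr charFp] := finPcharP F.
have := @pgroup.card_pgroup _ p (fingroup.setT_group _)
  (abelian.abelem_pgroup (abelian.fin_ring_pchar_abelem charFp)).
by rewrite cardsT => ->; rewrite pnatX (pnatE _ p_pr) charFp.
Qed.

Lemma expf_card_pow (R : finFieldType) i (x : R) : x ^+ (#|R| ^ i)%N = x.
Proof. by elim: i => [|i IH]; rewrite ?expr1 // expnSr exprM IH expf_card. Qed.

Lemma irredp_dvdp_X (F : fieldType) (P : {poly F}) :
  irreducible_poly P -> P %| 'X -> P.[0] = 0.
Proof.
rewrite -[X in _ %| X]subr0 -polyC0 => P_irr PX.
case: (irredp_XsubCP (irredp_XsubC 0) PX) => [P1|/eqp_root/(_ 0)].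
  by case: P_irr; rewrite (eqp_size P1) size_poly1.
by rewrite root_XsubC eqxx => /rootP.
Qed.

Section ResidueField.
Variables (F : finFieldType) (P : {poly F}).
Hypotheses (P_monic : P \is monic) (P_irr : irreducible_poly P).

Let K : finFieldType := {poly %/ P with (P_irr, P_monic)}.
Let q := #|F|.
Let d := (size P).-1.
Let const : {rmorphism F -> K} := qpolyC P.
Let residue : {rmorphism {poly F} -> K} := in_qpoly P.
Let alpha : K := residue 'X.

Let card_K : #|K| = (q ^ d)%N.
Proof. exact: card_qfpoly. Qed.

Let q_gt1 : (1 < q)%N := finNzRing_gt1 F.

Let d_gt0 : (0 < d)%N.
Proof. by case: P_irr; rewrite /d; case: (size P) => [|[|]]. Qed.

Let pnat_pchar_card_pow i : [pchar K].-nat (q ^ i)%N.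
Proof. by rewrite pnatX (eq_pnat _ (pchar_qpoly P)) pnat_pchar_card. Qed.

Lemma residue_eq0 g : (residue g == 0) = (P %| g).
Proof.
have mkP : mk_monic P = P by exact: (mk_monicE (P_irr, P_monic)).
apply/eqP/idP => [/val_eqP /= | P_g]; first by rewrite -Pdiv.IdomainMonic.modpE mkP.
by apply/val_eqP; rewrite /= -Pdiv.IdomainMonic.modpE mkP.
Qed.

Lemma residue_val (x : K) : residue (val x) = x.
Proof. by apply: val_inj; apply: in_qpoly_small; apply: size_mk_monic. Qed.

Lemma horner_map_residue g : (map_poly const g).[alpha] = residue g.
Proof. by rewrite -in_qpoly_comp_horner comp_polyXr. Qed.

Lemma exp_card_powD i (x y : K) : (x + y) ^+ (q ^ i)%N = x ^+ (q ^ i)%N + y ^+ (q ^ i)%N.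
Proof. exact/exprDn_pchar/pnat_pchar_card_pow. Qed.

Lemma exp_card_pow_inj i : injective (fun x : K => x ^+ (q ^ i)%N).
Proof.
move=> x y /= xy; apply/eqP; rewrite -subr_eq0.
have /eqP : (x - y) ^+ (q ^ i)%N = 0.
  by rewrite exp_card_powD exprNn_pchar ?xy ?subrr ?pnat_pchar_card_pow.
by rewrite expf_eq0 => /andP[].
Qed.

Lemma horner_map_exp_card_pow i g (x : K) :
  (map_poly const g).[x] ^+ (q ^ i)%N = (map_poly const g).[x ^+ (q ^ i)%N].
Proof.
elim/poly_ind: g => [|g c IH].
  by rewrite rmorph0 !horner0 expr0n expn_eq0 (gtn_eqF (ltnW q_gt1)).
rewrite rmorphD rmorphM /= map_polyX map_polyC !hornerE exp_card_powD exprMn IH.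
by rewrite -rmorphXn /= expf_card_pow.
Qed.

Lemma exp_card_pow_alpha_neq k : (0 < k < d)%N -> alpha ^+ (q ^ k)%N != alpha.
Proof.
case/andP=> k_gt0 k_lt_d; apply/eqP => alpha_fixed.
have all_fixed (x : K) : x ^+ (q ^ k)%N = x.
  by rewrite -(residue_val x) -horner_map_residue horner_map_exp_card_pow alpha_fixed.
have qk_gt1 : (1 < q ^ k)%N by rewrite -{1}(expn0 q) ltn_exp2l ?q_gt1.
have size_Xq : size ('X^(q ^ k) - 'X : {poly K}) = (q ^ k).+1.
  by rewrite size_polyDl ?size_polyXn // size_polyN size_polyX.
have := @max_poly_roots _ ('X^(q ^ k) - 'X) (enum K).
rewrite -size_poly_eq0 size_Xq enum_uniq -cardE card_K => /(_ isT).
have -> : all (root ('X^(q ^ k) - 'X)) (enum K).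
  by apply/allP => x _; rewrite rootE !hornerE all_fixed subrr.
by move=> /(_ isT isT); rewrite ltnS leqNgt ltn_exp2l ?q_gt1 ?k_lt_d.
Qed.

Lemma conjugates_inj : injective (fun i : 'I_d => alpha ^+ (q ^ i)%N).
Proof.
have neq (i j : 'I_d) : (i < j)%N -> alpha ^+ (q ^ i)%N != alpha ^+ (q ^ j)%N.
  move=> ij; rewrite -(subnKC (ltnW ij)) expnD mulnC exprM.
  apply: contra_neq (exp_card_pow_alpha_neq (k := j - i) _) => [/(@exp_card_pow_inj i) <- //|].
  by rewrite subn_gt0 ij (leq_ltn_trans (leq_subr _ _)).
move=> i j /= /eqP; case: (ltngtP i j) => [ij|ji|/val_inj //].
  by rewrite (negPf (neq i j ij)).
by rewrite eq_sym (negPf (neq j i ji)).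
Qed.

Lemma map_poly_prod_conjugates :
  map_poly const P = \prod_(i < d) ('X - (alpha ^+ (q ^ i)%N)%:P).
Proof.
pose conj := map (fun i : 'I_d => alpha ^+ (q ^ i)%N) (enum 'I_d).
have size_P : size (map_poly const P) = (size conj).+1.
  by rewrite size_map_poly size_map size_enum_ord prednK // ltnW //; case: P_irr.
rewrite [LHS](all_roots_prod_XsubC size_P); last first.
- by rewrite uniq_rootsE (map_inj_uniq conjugates_inj) enum_uniq.
- apply/allP => _ /mapP[i _ ->]; rewrite /root -horner_map_exp_card_pow.
  by rewrite horner_map_residue expf_eq0 residue_eq0 dvdpp expn_gt0 (ltnW q_gt1).
by rewrite lead_coef_map (monicP P_monic) rmorph1 scale1r big_map big_enum.
Qed.

Lemma const_coef0 : const P.[0] = (- alpha) ^+ (\sum_(i < d) q ^ i)%N.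
Proof.
rewrite horner_coef0 -coef_map -horner_coef0 map_poly_prod_conjugates horner_prod -prodrXr.
apply: eq_bigr => i _; rewrite !hornerE exprNn_pchar ?pnat_pchar_card_pow //.
Qed.

Lemma exp_card_fixed_const (y : K) : y ^+ q = y -> exists a : F, const a = y.
Proof.
move=> y_fixed; have := congr1 (map_poly const) (finField_genPoly F).
rewrite rmorphB rmorph_prod /= map_polyXn map_polyX => genK.
have : root (\prod_(a : F) map_poly const ('X - a%:P)) y.
  by rewrite -genK rootE !hornerE y_fixed subrr.
rewrite rootE horner_prod => /prodf_eq0[a _].
by rewrite map_polyXsubC hornerXsubC subr_eq0 => /eqP->; exists a.
Qed.

(* If c^2 = -alpha then P(0) = (-alpha)^s = (c^s)^2 with s = 1 + q + ... + q^(d-1),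
   and c^s lies in F because s * q = q^d + (s - 1). *)
Lemma sqr_coef0_of_dvdp_sqr_addX D : P %| D ^+ 2 + 'X -> exists a : F, a ^+ 2 = P.[0].
Proof.
rewrite -residue_eq0 rmorphD rmorphXn /= addr_eq0 => /eqP sqr_c.
set c := residue D in sqr_c; set s := (\sum_(i < d) q ^ i)%N.
have qd : (q ^ d).-1 = (q.-1 * s)%N by rewrite predn_exp.
have s_gt0 : (0 < s)%N.
  by rewrite /s -(prednK d_gt0) big_ord_recl expn0.
have [a ca] : exists a : F, const a = c ^+ s.
  apply: exp_card_fixed_const; rewrite -exprM.
  have -> : (s * q = q ^ d + s.-1)%N.
    have := expn_gt0 q d; have := q_gt1; lia.
  by rewrite exprD -card_K expf_card -exprS prednK.
exists a; apply: (fmorph_inj const).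
by rewrite rmorphXn const_coef0 ca -exprM mulnC exprM sqr_c.
Qed.

Lemma dvdp_sub_sqr_addX_sqr u : P.[0] != 0 ->
  exists A B : {poly F}, P %| u - (A ^+ 2 + 'X * B ^+ 2).
Proof.
move=> P0; have alpha_neq0 : alpha != 0.
  by rewrite residue_eq0; apply: contra P0 => /(irredp_dvdp_X P_irr) ->.
have [a [b ab]] := sqr_add_mul_sqr (residue u) alpha_neq0.
exists (val a), (val b).
rewrite -residue_eq0 rmorphB rmorphD (rmorphXn residue) rmorphM (rmorphXn residue).
by rewrite !residue_val -/alpha ab subrr.
Qed.

End ResidueField.

(** * The form A^2 + T B^2 at P *)

Lemma two_neq0_odd_card (R : finFieldType) : odd #|R| -> 2%:R != 0 :> R.
Proof.
move=> oddR; apply/negP => /eqP two0.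
have char2 : 2%N \in [pchar R] by rewrite inE /= two0 eqxx.
have := pnat_pchar_card R; rewrite (eq_pnat _ (pcharf_eq char2)) => /p_natP[k cardR].
by move: oddR (finNzRing_gt1 R); rewrite cardR oddX; case: (k).
Qed.

Lemma sqr_addX_sqr_scale (R : comNzRingType) (C A B : {poly R}) :
  (C * A) ^+ 2 + 'X * (C * B) ^+ 2 = C ^+ 2 * (A ^+ 2 + 'X * B ^+ 2).
Proof. by ring. Qed.

Definition odd_val_lt (R : idomainType) (P g : {poly R}) (n : nat) : bool :=
  [exists j : 'I_n, [&& odd j, P ^+ j %| g & ~~ (P ^+ j.+1 %| g)]].

Section Valuation.
Variables (F : finFieldType) (P : {poly F}).
Hypotheses (P_monic : P \is monic) (P_irr : irreducible_poly P).

Lemma dvdp_mul_irr A B : P %| A * B -> (P %| A) || (P %| B).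
Proof.
by case: (boolP (P %| A)) => //= nPA; rewrite Gauss_dvdpr // irreducible_poly_coprime.
Qed.

Lemma exists_exact_dvdp_exp n g :
  ~~ (P ^+ n %| g) -> exists2 j, (j < n)%N & (P ^+ j %| g) && ~~ (P ^+ j.+1 %| g).
Proof.
elim: n => [|n IH]; first by rewrite expr0 dvd1p.
case: (boolP (P ^+ n %| g)) => [Pn_g nPn1_g|/IH[j jn exact_j] _].
  by exists n; rewrite ?Pn_g.
by exists j => //; apply: ltnW.
Qed.

Hypothesis P0_nonsqr : forall y : F, y ^+ 2 != P.[0].

Lemma dvdp_sqr_addX_sqr A B : P %| A ^+ 2 + 'X * B ^+ 2 -> (P %| A) && (P %| B).
Proof.
move=> PN; case: (boolP (P %| B)) => [PB|nPB].
  rewrite andbT; have PXB : P %| 'X * B ^+ 2 by rewrite dvdp_mull // dvdp_exp.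
  have : P %| A * A by rewrite -expr2 -(dvdp_addl _ PXB).
  by case/dvdp_mul_irr/orP.
have /Bezout_eq1_coprimepP[[u v] /= uv] : coprimep P B by rewrite irreducible_poly_coprime.
have : P %| (A * v) ^+ 2 + 'X.
  have -> : (A * v) ^+ 2 + 'X = v ^+ 2 * (A ^+ 2 + 'X * B ^+ 2) + 'X * (u * P) * (1 + v * B).
    by rewrite -[u * P](addrK (v * B)) uv; ring.
  by apply: dvdp_add; [exact: dvdp_mull | rewrite dvdp_mulr // dvdp_mull // dvdp_mulIr].
by case/(sqr_coef0_of_dvdp_sqr_addX P_monic P_irr) => y /eqP; rewrite (negPf (P0_nonsqr y)).
Qed.

Lemma dvdp_sqr_addX_sqr_factor k A B : P ^+ k.+1 %| A ^+ 2 + 'X * B ^+ 2 ->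
  exists A' B', A ^+ 2 + 'X * B ^+ 2 = P ^+ 2 * (A' ^+ 2 + 'X * B' ^+ 2).
Proof.
move=> PN; have /dvdp_sqr_addX_sqr/andP[/divpK eA /divpK eB] : P %| A ^+ 2 + 'X * B ^+ 2.
  by apply: dvdp_trans PN; rewrite exprS dvdp_mulr.
by exists (A %/ P), (B %/ P); rewrite -sqr_addX_sqr_scale !(mulrC P) eA eB.
Qed.

Lemma dvdp_odd_exp_sqr_addX_sqr m A B :
  P ^+ (2 * m).+1 %| A ^+ 2 + 'X * B ^+ 2 -> P ^+ (2 * m).+2 %| A ^+ 2 + 'X * B ^+ 2.
Proof.
have P2_neq0 : P ^+ 2 != 0 by rewrite expf_neq0 ?monic_neq0.
elim: m A B => [|m IH] A B PN; have [A' [B' NA'B']] := dvdp_sqr_addX_sqr_factor PN.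
  by rewrite NA'B' dvdp_mulr.
have shift k : P ^+ (2 * m.+1 + k) = P ^+ 2 * P ^+ (2 * m + k).
  by rewrite -exprD mulnS addnA.
move: PN; rewrite NA'B' -[(2 * m.+1).+2]addn2 -[(2 * m.+1).+1]addn1 !shift.
by rewrite !dvdp_mul2l // addn1 addn2; exact: IH.
Qed.

Let P0_neq0 : P.[0] != 0.
Proof. by move: (P0_nonsqr 0); rewrite expr0n eq_sym. Qed.

Hypothesis odd_card : odd #|F|.

(* Newton step: take 2 s = w b, where b is the inverse of c C modulo P. *)
Lemma hensel_sqr_step n c C w : coprimep P (c * C) ->
  exists s, P ^+ n.+2 %| C ^+ 2 * c + P ^+ n.+1 * w - (C + P ^+ n.+1 * s) ^+ 2 * c.
Proof.
case/Bezout_eq1_coprimepP => -[a b] /= bezout; set h : {poly F} := (2%:R)^-1%:P.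
have half : 2%:R * h = 1 by rewrite -polyC_natr -polyCM mulfV ?two_neq0_odd_card // polyC1.
exists (w * b * h).
have -> : C ^+ 2 * c + P ^+ n.+1 * w - (C + P ^+ n.+1 * (w * b * h)) ^+ 2 * c =
    P ^+ n.+2 * (w * a - P ^+ n * (w * b * h) ^+ 2 * c)
    + P ^+ n.+1 * w * (1 - (a * P + b * (c * C)))
    + P ^+ n.+1 * w * b * C * c * (1 - 2%:R * h).
  by rewrite !exprS; move: (P ^+ n) => Pn; ring.
by rewrite bezout half !subrr !mulr0 !addr0 dvdp_mulr.
Qed.

Lemma hensel_sqr_addX_sqr n u : ~~ (P %| u) ->
  exists A B, P ^+ n.+1 %| u - (A ^+ 2 + 'X * B ^+ 2).
Proof.
move=> nPu; elim: n => [|n [A [B PnN]]].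
  by rewrite expr1; apply: dvdp_sub_sqr_addX_sqr.
have [w u_eq] : exists w, u = A ^+ 2 + 'X * B ^+ 2 + P ^+ n.+1 * w.
  exists ((u - (A ^+ 2 + 'X * B ^+ 2)) %/ P ^+ n.+1).
  by rewrite [P ^+ _ * _]mulrC divpK // addrC subrK.
have nPN : ~~ (P %| A ^+ 2 + 'X * B ^+ 2).
  by apply: contra nPu => PN; rewrite u_eq dvdp_add // dvdp_mulr // exprS dvdp_mulr.
have nPX : ~~ (P %| 'X) by apply: contra P0_neq0 => /(irredp_dvdp_X P_irr) ->.
case: (boolP (P %| A)) => PA.
  have nPB : ~~ (P %| B).
    by apply: contra nPN => PB; rewrite dvdp_add ?dvdp_mull // expr2 dvdp_mulr.
  have [|s Ps] := hensel_sqr_step n w (c := 'X) (C := B).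
    by rewrite coprimepMr !irreducible_poly_coprime ?nPX.
  exists A, (B + P ^+ n.+1 * s); congr (_ %| _): Ps.
  by rewrite u_eq; ring.
have [|s Ps] := hensel_sqr_step n w (c := 1) (C := A).
  by rewrite mul1r irreducible_poly_coprime.
exists (A + P ^+ n.+1 * s), B; congr (_ %| _): Ps.
by rewrite u_eq; ring.
Qed.

Lemma inAq_exp n g : inAq (P ^+ n) g <-> ~~ odd_val_lt P g n.
Proof.
split=> [[A [B PnN]]|no_odd].
  apply/existsPn => -[j /= jn]; apply/and3P => -[odd_j Pj_g]; apply/negP; rewrite negbK.
  have j_eq : j = (2 * j./2).+1 by rewrite -[LHS]odd_double_half odd_j mul2n.
  have : P ^+ j %| A ^+ 2 + 'X * B ^+ 2.
    by rewrite -(dvdp_subr _ Pj_g) (dvdp_trans _ PnN) // dvdp_exp2l // ltnW.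
  rewrite {1}j_eq => /dvdp_odd_exp_sqr_addX_sqr; rewrite -j_eq => Pj1_N.
  by rewrite -(subrK (A ^+ 2 + 'X * B ^+ 2) g) dvdp_add // (dvdp_trans _ PnN) // dvdp_exp2l.
case: (boolP (P ^+ n %| g)) => [Pn_g|/exists_exact_dvdp_exp[j jn /andP[Pj_g nPj1_g]]].
  by exists 0, 0; rewrite expr0n /= mulr0 addr0 subr0.
have even_j : ~~ odd j.
  by apply: contra no_odd => odd_j; apply/existsP; exists (Ordinal jn); rewrite /= odd_j Pj_g.
have [u g_eq] : exists u, g = P ^+ j * u by exists (g %/ P ^+ j); rewrite mulrC divpK.
have nPu : ~~ (P %| u).
  by apply: contra nPj1_g; rewrite g_eq exprSr dvdp_mul2l // expf_neq0 ?monic_neq0.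
have [A [B PN]] := hensel_sqr_addX_sqr (n - j).-1 nPu.
exists (P ^+ j./2 * A), (P ^+ j./2 * B).
rewrite sqr_addX_sqr_scale -exprM muln2 halfK (negPf even_j) subn0 g_eq -mulrBr.
have -> : n = (j + (n - j).-1.+1)%N by lia.
by rewrite exprD dvdp_mul2l ?expf_neq0 ?monic_neq0.
Qed.

End Valuation.

Lemma odd_val_ltS (R : idomainType) (P g : {poly R}) m :
  odd_val_lt P g m.+1 = odd_val_lt P g m || [&& odd m, P ^+ m %| g & ~~ (P ^+ m.+1 %| g)].
Proof.
apply/existsP/orP => [[j /= exact_j]|[/existsP[j exact_j]|exact_m]].
- have [jm|mj] := ltnP j m; first by left; apply/existsP; exists (Ordinal jm).
  by right; suff -> : m = j by []; apply/eqP; rewrite eqn_leq mj -ltnS ltn_ord.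
- by exists (widen_ord (leqnSn m) j).
- by exists ord_max.
Qed.

Lemma odd_val_lt_dvdp (R : idomainType) (P g : {poly R}) m :
  P ^+ m %| g -> ~~ odd_val_lt P g m.
Proof.
move=> Pm_g; apply/existsPn => j; apply/and3P => -[_ _]; apply/negP; rewrite negbK.
by apply: dvdp_trans Pm_g; rewrite dvdp_exp2l.
Qed.

Lemma odd_val_lt_dvdp1 (R : idomainType) (P g : {poly R}) m : odd_val_lt P g m -> P %| g.
Proof.
case/existsP=> j /and3P[odd_j Pj_g _]; apply: dvdp_trans Pj_g.
by rewrite -[X in X %| _]expr1 dvdp_exp2l // lt0n; apply: contraTneq odd_j => ->.
Qed.

Lemma odd_val_lt_add_exp (R : idomainType) (P x y : {poly R}) n :
  odd_val_lt P x n -> odd_val_lt P (x + P ^+ n * y) n.+1.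
Proof.
case/existsP=> j /and3P[odd_j Pj_x nPj1_x]; apply/existsP; exists (widen_ord (leqnSn n) j) => /=.
have Pj_y : P ^+ j %| P ^+ n * y by rewrite dvdp_mulr // dvdp_exp2l // ltnW.
have Pj1_y : P ^+ j.+1 %| P ^+ n * y by rewrite dvdp_mulr // dvdp_exp2l.
by rewrite odd_j (dvdp_addl _ Pj_y) Pj_x (dvdp_addl _ Pj1_y).
Qed.

(** * Counting residues *)

Section PolyTuple.
Variable F : finFieldType.

Definition poly_tuple N (p : {poly F}) : N.-tuple F :=
  [tuple of mkseq (fun i => nth 0 p i) N].

Lemma poly_tupleK N (p : {poly F}) : (size p <= N)%N -> Poly (poly_tuple N p) = p.
Proof.
move=> sp; apply/polyP => i; rewrite coef_Poly /=.
have [iN|Ni] := ltnP i N; first by rewrite nth_mkseq.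
by rewrite !nth_default ?size_mkseq // (leq_trans sp Ni).
Qed.

Lemma Poly_tuple_inj N : injective (fun t : N.-tuple F => Poly t).
Proof.
move=> t1 t2 /= t12; apply: val_inj; apply: (@eq_from_nth _ 0); first by rewrite !size_tuple.
by move=> i _; have := congr1 (fun p : {poly F} => p`_i) t12; rewrite /= !coef_Poly.
Qed.

Lemma size_Poly_tuple N (t : N.-tuple F) : (size (Poly t) <= N)%N.
Proof. by rewrite (leq_trans (size_Poly _)) ?size_tuple. Qed.

(* The solutions are the r + D * s with r = (- g) %% D and size s <= N - deg D. *)
Lemma card_dvdp_Poly_add N (D g : {poly F}) : D \is monic -> (size D <= N.+1)%N ->
  #|[set t : N.-tuple F | D %| Poly t + g]| = (#|F| ^ (N - (size D).-1))%N.
Proof.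
move=> D_monic sDN; set k := (size D).-1.
have sD : size D = k.+1 by rewrite prednK // size_poly_gt0 monic_neq0.
set r := (- g) %% D.
have sr : (size r <= k)%N by rewrite -ltnS -sD ltn_modp monic_neq0.
have kN : (k <= N)%N by rewrite -ltnS -sD.
have size_lift (s : (N - k).-tuple F) : (size (r + D * Poly s)%R <= N)%N.
  rewrite (leq_trans (size_polyD _ _)) // geq_max (leq_trans sr kN) /=.
  rewrite (leq_trans (size_mul_leq _ _)) // sD addSn /= -{2}(subnKC kN) leq_add2l.
  exact: size_Poly_tuple.
pose lift (s : (N - k).-tuple F) := poly_tuple N (r + D * Poly s).
have lift_inj : injective lift.
  move=> s1 s2 /(congr1 (fun t : N.-tuple F => Poly t)); rewrite !poly_tupleK //.
  by move/addrI/(mulfI (monic_neq0 D_monic))/Poly_tuple_inj.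
have D_rg : D %| r + g.
  by rewrite -[g]opprK (divp_eq (- g) D) -/r opprD addrCA subrr addr0 dvdpNr dvdp_mull.
have -> : [set t : N.-tuple F | D %| Poly t + g] = lift @: setT.
  apply/setP => t; rewrite inE; apply/idP/imsetP => [Dt|[s _ ->]]; last first.
    by rewrite poly_tupleK // addrAC dvdp_add // dvdp_mulIl.
  have /divpK t_eq : D %| Poly t - r by rewrite -(dvdp_addl _ D_rg) addrA subrK.
  have size_quot : (size ((Poly t - r) %/ D)%R <= N - k)%N.
    rewrite size_divp ?monic_neq0 // leq_sub2r // (leq_trans (size_polyD _ _)) //.
    by rewrite geq_max size_Poly_tuple size_polyN (leq_trans sr kN).
  exists (poly_tuple (N - k) ((Poly t - r) %/ D)) => //.
  apply: (@Poly_tuple_inj N); rewrite /= poly_tupleK ?size_lift // (poly_tupleK size_quot).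
  by rewrite mulrC t_eq addrC subrK.
by rewrite card_imset // cardsT card_tuple.
Qed.

End PolyTuple.

Section OddValuationCount.
Variables (F : finFieldType) (P : {poly F}).
Hypothesis P_monic : P \is monic.

Let d := (size P).-1.
Let Q := normP P.

Lemma card_dvdp_exp_Poly_add n j g : (j <= n)%N ->
  #|[set t : (d * n).-tuple F | P ^+ j %| Poly t + g]| = (Q ^ (n - j))%N.
Proof.
move=> jn; have P_neq0 : P != 0 by rewrite monic_neq0.
have size_Pj : size (P ^+ j) = (d * j).+1 by rewrite -size_exp prednK // size_poly_gt0 expf_neq0.
by rewrite card_dvdp_Poly_add ?monic_exp ?size_Pj ?ltnS ?leq_mul2l ?jn ?orbT // -expnM mulnBr.
Qed.

Lemma card_exact_dvdp_exp_Poly_add n j g : (j < n)%N ->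
  (#|[set t : (d * n).-tuple F | (P ^+ j %| Poly t + g)%R && ~~ (P ^+ j.+1 %| Poly t + g)%R]|
    + Q ^ (n - j.+1) = Q ^ (n - j))%N.
Proof.
move=> jn; rewrite -(card_dvdp_exp_Poly_add g jn) -(card_dvdp_exp_Poly_add g (ltnW jn)).
set A := [set t | (P ^+ j %| _)%R]; set B := [set t | (P ^+ j.+1 %| _)%R].
rewrite -(cardsID B A) addnC; congr addn; apply: eq_card => t; rewrite !inE.
  by apply/idP/andP => [Pj1|[]//]; split=> //; apply: dvdp_trans Pj1; rewrite dvdp_exp2l.
by rewrite andbC.
Qed.

Definition odd_val_set n m g := [set t : (d * n).-tuple F | odd_val_lt P (Poly t + g) m].

Lemma card_odd_val_set n m g : (m <= n)%N ->
  ((Q + 1) * #|odd_val_set n m g| + Q ^ (n - m + odd m) = Q ^ n)%N.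
Proof.
elim: m => [|m IH] mn.
  rewrite subn0 addn0 (_ : odd_val_set n 0 g = set0) ?cards0 ?muln0 //.
  by apply/setP => t; rewrite !inE; apply/existsP => -[[]].
pose E := [set t : (d * n).-tuple F | (P ^+ m %| Poly t + g)%R && ~~ (P ^+ m.+1 %| Poly t + g)%R].
have split_set : odd_val_set n m.+1 g = odd_val_set n m g :|: (if odd m then E else set0).
  by apply/setP => t; rewrite !inE odd_val_ltS; case: (odd m); rewrite ?inE ?orbF.
have disj : [disjoint odd_val_set n m g & E].
  apply/pred0P => t /=; rewrite !inE; apply/negP => -[/andP[oddv /andP[Pm _]]].
  by move: oddv; rewrite (negPf (odd_val_lt_dvdp Pm)).
have {IH} := IH (ltnW mn); rewrite split_set oddS; case: ifP => odd_m /=; last first.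
  by rewrite setU0 addn0 (addn1 (n - m.+1)) subnSK.
rewrite cardsU (disjoint_setI0 disj) cards0 subn0 addn0 -(subnSK mn) (addn1 (n - m.+1).+1).
have := card_exact_dvdp_exp_Poly_add g mn; rewrite -/E -(subnSK mn) !expnS.
move: (Q ^ (n - m.+1))%N (Q ^ n)%N #|E| #|odd_val_set n m g| => X Qn e a; nia.
Qed.

Lemma card_odd_val_set_shift n g : #|odd_val_set n n g| = #|odd_val_set n n 0|.
Proof.
apply/eqP; rewrite -(@eqn_pmul2l (Q + 1)) ?addn1 // -addn1.
by rewrite -(eqn_add2r (Q ^ (n - n + odd n))) !card_odd_val_set.
Qed.

Definition bad_set n (h : seq {poly F}) :=
  [set t : (d * n).-tuple F | has (fun hi => odd_val_lt P (Poly t + hi) n) h].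

Lemma bad_set_nil n : bad_set n [::] = set0.
Proof. by apply/setP => t; rewrite !inE. Qed.

Lemma bad_set_cons n hi h : bad_set n (hi :: h) = odd_val_set n n hi :|: bad_set n h.
Proof. by apply/setP => t; rewrite !inE. Qed.

Lemma card_bad_set_le n h : (#|bad_set n h| <= size h * #|odd_val_set n n 0|)%N.
Proof.
elim: h => [|hi h IH]; first by rewrite bad_set_nil cards0.
by rewrite bad_set_cons (leq_trans (leq_card_setU _ _)) // card_odd_val_set_shift leq_add2l.
Qed.

Lemma card_bad_set_ge n h hi : hi \in h -> (#|odd_val_set n n 0| <= #|bad_set n h|)%N.
Proof.
move=> hi_h; rewrite -(card_odd_val_set_shift n hi); apply/subset_leq_card/subsetP => t.
by rewrite !inE => oddv; apply/hasP; exists hi.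
Qed.

Lemma card_bad_set_eq n h : uniq h -> {in h &, forall a b, a != b -> ~~ (P %| a - b)} ->
  #|bad_set n h| = (size h * #|odd_val_set n n 0|)%N.
Proof.
elim: h => [_ _|hi h IH /= /andP[hi_h uniq_h] h_sep]; first by rewrite bad_set_nil cards0.
have disj : [disjoint odd_val_set n n hi & bad_set n h].
  apply/pred0P => t /=; rewrite !inE; apply/negP => -[/andP[oddv /hasP[hj hj_h oddvj]]].
  have hij : hi != hj by apply: contraNneq hi_h => ->.
  have hj_hih : hj \in hi :: h by rewrite inE hj_h orbT.
  move/negP: (h_sep hi hj (mem_head _ _) hj_hih hij); apply.
  have := dvdp_sub (odd_val_lt_dvdp1 oddv) (odd_val_lt_dvdp1 oddvj).
  by rewrite opprD addrACA subrr add0r.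
rewrite bad_set_cons cardsU (disjoint_setI0 disj) cards0 subn0 card_odd_val_set_shift IH //.
by move=> a b a_h b_h; apply: h_sep; rewrite inE ?a_h ?b_h orbT.
Qed.

Lemma card_bad_set_mono n h : (Q * #|bad_set n h| <= #|bad_set n.+1 h|)%N.
Proof.
pose lift (ts : (d * n).-tuple F * d.-tuple F) : (d * n.+1).-tuple F :=
  poly_tuple (d * n.+1) (Poly ts.1 + P ^+ n * Poly ts.2).
have size_Pn : size (P ^+ n) = (d * n).+1.
  by rewrite -size_exp prednK // size_poly_gt0 expf_neq0 ?monic_neq0.
have size_lift (ts : (d * n).-tuple F * d.-tuple F) :
    (size (Poly ts.1 + P ^+ n * Poly ts.2)%R <= d * n.+1)%N.
  rewrite (leq_trans (size_polyD _ _)) // geq_max; apply/andP; split.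
    by rewrite (leq_trans (size_Poly_tuple _)) // leq_mul2l leqnSn orbT.
  rewrite (leq_trans (size_mul_leq _ _)) // size_Pn addSn /= mulnS addnC leq_add2r.
  exact: size_Poly_tuple.
have lift_inj : injective lift.
  move=> [t1 s1] [t2 s2] /(congr1 (fun t : (d * n.+1).-tuple F => Poly t)).
  rewrite (poly_tupleK (size_lift (t1, s1))) (poly_tupleK (size_lift (t2, s2))) /= => eq12.
  have diff_eq : Poly t1 - Poly t2 = (Poly s2 - Poly s1) * P ^+ n.
    by rewrite -[Poly t1](addrK (P ^+ n * Poly s1)) eq12; ring.
  have [s_eq|s_neq] := eqVneq (Poly s2 - Poly s1) 0.
    move: diff_eq; rewrite s_eq mul0r => /eqP; rewrite subr_eq0 => /eqP/Poly_tuple_inj->.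
    by move/eqP: s_eq; rewrite subr_eq0 => /eqP/Poly_tuple_inj->.
  have : (size (Poly t1 - Poly t2)%R <= d * n)%N.
    by rewrite (leq_trans (size_polyD _ _)) // geq_max size_polyN !size_Poly_tuple.
  rewrite diff_eq size_Mmonic ?monic_exp // size_Pn addnS /= addnC -{2}[(d * n)%N]addn0.
  by rewrite leq_add2l leqn0 size_poly_eq0 (negPf s_neq).
have : lift @: setX (bad_set n h) setT \subset bad_set n.+1 h.
  apply/subsetP => _ /imsetP[[t s] /setXP[bad_t _] ->]; rewrite !inE in bad_t *.
  case/hasP: bad_t => hi hi_h oddv; apply/hasP; exists hi => //.
  by rewrite poly_tupleK ?(size_lift (t, s)) //= addrAC odd_val_lt_add_exp.
by move/subset_leq_card; rewrite card_imset // cardsX cardsT card_tuple mulnC.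
Qed.

End OddValuationCount.

Lemma asboolP (X : Prop) : reflect X (asbool X).
Proof. by rewrite /asbool; case: excluded_middle_informative => ?; constructor. Qed.

Lemma sub_dvdp_Deltah (F : finFieldType) (h : seq {poly F}) a b :
  a \in h -> b \in h -> a != b -> a - b %| Deltah h.
Proof.
move=> a_h b_h ab; have := nth_index 0 a_h; have := nth_index 0 b_h.
rewrite -index_mem in a_h; rewrite -index_mem in b_h.
set i := Ordinal a_h; set j := Ordinal b_h => hj hi.
have ij : i != j by apply: contra_neq ab => -[ij]; rewrite -hi -hj /= ij.
by rewrite /Deltah (bigD1 i) //= (bigD1 j) //= hi hj dvdp_mulr // dvdp_mulr.
Qed.

Lemma chiq_eqN1 (F : finFieldType) (P : {poly F}) : chiq P = -1 -> forall y : F, y ^+ 2 != P.[0].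
Proof.
rewrite /chiq; case: ifP => // P0; case: ifP => // nsq _ y.
by apply: contraFneq nsq => sq; apply/existsP; exists y; rewrite sq.
Qed.

Lemma normP_gt1 (F : finFieldType) (P : {poly F}) : irreducible_poly P -> (1 < normP P)%N.
Proof.
case=> sP _; rewrite /normP -{1}(expn0 #|F|) ltn_exp2l ?finNzRing_gt1 //.
by rewrite -ltnS prednK // ltnW.
Qed.

Lemma countAqh_add_card_bad_set (F : finFieldType) (P : {poly F}) (h : seq {poly F}) n :
  odd #|F| -> P \is monic -> irreducible_poly P -> (forall y : F, y ^+ 2 != P.[0]) ->
  (countAqh h P n + #|bad_set P n h| = normP P ^ n)%N.
Proof.
move=> oddF P_monic P_irr P0_nonsqr; rewrite /countAqh.
have -> : [set t : ((size P).-1 * n).-tuple F | asbool (inAqh h (P ^+ n) (Poly t))]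
    = ~: bad_set P n h.
  apply/setP => t; rewrite !inE; apply/asboolP/hasPn => [inA hi hi_h|no_odd hi hi_h].
    exact/(inAq_exp P_monic P_irr P0_nonsqr oddF)/inA.
  exact/(inAq_exp P_monic P_irr P0_nonsqr oddF)/no_odd.
by rewrite addnC cardsC card_tuple /normP expnM.
Qed.

(** * The limit *)

(* Imported only here: Reals rebinds the [%N] delimiter to [BinNat.N]. *)
From Stdlib Require Import Reals Lra.

Section DensityLimit.
Local Open Scope R_scope.

Lemma INR_expn (Q n : nat) : INR (expn Q n) = INR Q ^ n.
Proof. by elim: n => [|n IH]; rewrite ?expn0 // expnS mulnE mult_INR IH. Qed.

Lemma Rdiv_nonneg a b : 0 <= a -> 0 < b -> 0 <= a / b.
Proof. by move=> a_ge0 b_gt0; apply: Rmult_le_pos => //; apply/Rlt_le/Rinv_0_lt_compat. Qed.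

Lemma Un_cv_const a : Un_cv (fun _ => a) a.
Proof. by move=> eps eps_gt0; exists 0%nat => n _; rewrite R_dist_eq. Qed.

Variables (Q : nat) (c : nat -> nat).
Hypothesis Q_gt1 : (1 < Q)%nat.
Hypothesis c_rec : forall n, ((Q + 1) * c n + expn Q (odd n))%nat = expn Q n.

Let Q_gt1R : 1 < INR Q.
Proof. by apply: lt_1_INR; apply/ltP. Qed.

Let expQ_gt0 n : 0 < INR (expn Q n).
Proof. by rewrite INR_expn; apply: pow_lt; lra. Qed.

Lemma c_density n :
  INR (c n) / INR (expn Q n) = (1 - INR (expn Q (odd n)) / INR (expn Q n)) / (INR Q + 1).
Proof.
have := c_rec n => /(f_equal INR); rewrite plus_INR mult_INR plus_INR /= => E.
have := expQ_gt0 n; rewrite -E => pos; field; lra.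
Qed.

Lemma cv_c_density : Un_cv (fun n => INR (c n) / INR (expn Q n)) (/ (INR Q + 1)).
Proof.
move=> eps eps_gt0; set x := / INR Q.
have x_gt0 : 0 < x by apply: Rinv_0_lt_compat; lra.
have xQ : x * INR Q = 1 by rewrite /x Rinv_l //; lra.
have [N HN] := @pow_lt_1_zero x ltac:(rewrite Rabs_pos_eq; nra) (eps * x) ltac:(nra).
exists N => n nN; rewrite /Rdist c_density.
set r := INR (expn Q (odd n)) / INR (expn Q n).
have xn_ge0 : 0 <= x ^ n by apply: pow_le; lra.
have r_ge0 : 0 <= r by apply: Rdiv_nonneg; [apply: pos_INR | apply: expQ_gt0].
have r_lt : r < eps.
  have : INR (expn Q (odd n)) <= INR Q by case: odd; rewrite ?expn1 ?expn0 /=; lra.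
  have := HN n nN; rewrite Rabs_pos_eq // /r /Rdiv INR_expn [INR (expn Q n)]INR_expn -pow_inv -/x.
  nra.
have -> : (1 - r) / (INR Q + 1) - / (INR Q + 1) = - (r / (INR Q + 1)) by field; lra.
rewrite Rabs_Ropp Rabs_pos_eq; last by apply: Rdiv_nonneg; lra.
apply: Rle_lt_trans r_lt; rewrite -[X in _ <= X]Rdiv_1_r; apply: Rmult_le_compat_l => //.
by apply: Rinv_le_contravar; lra.
Qed.

Variables (k : nat) (b : nat -> nat).
Hypothesis c_le_b : forall n, (c n <= b n)%nat.
Hypothesis b_le_kc : forall n, (b n <= k * c n)%nat.
Hypothesis b_super : forall n, (Q * b n <= b n.+1)%nat.

Lemma cv_b_density : exists eta, 1 <= eta <= INR k /\
  Un_cv (fun n => INR (b n) / INR (expn Q n)) (eta / (INR Q + 1)) /\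
  ((forall n, b n = k * c n)%nat -> eta = INR k).
Proof.
pose u n := INR (b n) / INR (expn Q n); pose e n := INR (c n) / INR (expn Q n).
have Qn_inv_gt0 n : 0 < / INR (expn Q n) by apply/Rinv_0_lt_compat/expQ_gt0.
have e_le_u n : e n <= u n.
  by apply: Rmult_le_compat_r; [apply/Rlt_le/Qn_inv_gt0 | apply/le_INR/leP/c_le_b].
have u_le_ke n : u n <= INR k * e n.
  rewrite /u /e -Rmult_assoc -mult_INR -mulnE.
  by apply: Rmult_le_compat_r; [apply/Rlt_le/Qn_inv_gt0 | apply/le_INR/leP/b_le_kc].
have e_le1 n : e n <= 1.
  rewrite /e -[X in _ <= X](Rinv_r (INR (expn Q n))); last exact/Rgt_not_eq/expQ_gt0.
  apply: Rmult_le_compat_r; [apply/Rlt_le/Qn_inv_gt0 | apply/le_INR/leP].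
  by rewrite -(c_rec n) mulnDl mul1n -addnA addnCA leq_addr.
have u_growing : Un_growing u.
  move=> n; have := expQ_gt0 n; rewrite /u expnS mulnE mult_INR => Qn_gt0.
  have -> : INR (b n) / INR (expn Q n) = INR Q * INR (b n) * / (INR Q * INR (expn Q n)).
    by field; lra.
  apply: Rmult_le_compat_r; first by apply/Rlt_le/Rinv_0_lt_compat; nra.
  by rewrite -mult_INR -mulnE; apply/le_INR/leP/b_super.
have u_ub : has_ub u.
  by exists (INR k) => _ [n ->]; have := u_le_ke n; have := e_le1 n; have := pos_INR k; nra.
have [L uL] := growing_cv _ u_growing u_ub.
have ke_cv := CV_mult _ _ _ _ (Un_cv_const (INR k)) cv_c_density.
have Q1_gt0 : 0 < INR Q + 1 by lra.
exists (L * (INR Q + 1)); rewrite /Rdiv Rmult_assoc Rinv_r ?Rmult_1_r; last lra.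
split; [split|split=> // b_eq].
- have := Rle_cv_lim e_le_u cv_c_density uL.
  by move/(Rmult_le_compat_r (INR Q + 1)) => /(_ (Rlt_le _ _ Q1_gt0)); rewrite Rinv_l; lra.
- have := Rle_cv_lim u_le_ke uL ke_cv.
  move/(Rmult_le_compat_r (INR Q + 1)) => /(_ (Rlt_le _ _ Q1_gt0)).
  by rewrite Rmult_assoc Rinv_l; lra.
- have : Un_cv u (INR k * / (INR Q + 1)).
    by apply: Un_cv_ext ke_cv => n; rewrite /u /e b_eq mulnE mult_INR /Rdiv Rmult_assoc.
  by move/(UL_sequence _ _ _ uL) ->; rewrite Rmult_assoc Rinv_l; lra.
Qed.

End DensityLimit.

Lemma countAqh_ratio (F : finFieldType) (P : {poly F}) (h : seq {poly F}) n :
  odd #|F| -> P \is monic -> irreducible_poly P -> (forall y : F, y ^+ 2 != P.[0]) ->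
  (INR (countAqh h P n) / INR (normP P ^ n)%nat
    = 1 - INR #|bad_set P n h| / INR (expn (normP P) n))%R.
Proof.
move=> oddF P_monic P_irr P0_nonsqr.
have Qn_gt0 : (0 < INR (expn (normP P) n))%R.
  by apply/lt_0_INR/ltP; rewrite expn_gt0 ltnW ?normP_gt1.
have /(f_equal INR) := countAqh_add_card_bad_set h n oddF P_monic P_irr P0_nonsqr.
by rewrite pow_INR -INR_expn plus_INR => E; rewrite -E in Qn_gt0 *; field; lra.
Qed.

Theorem mainTheorem10 (F : finFieldType) (P : {poly F}) (h : seq {poly F}) :
  odd #|F| ->
  P \is monic -> irreducible_poly P ->
  chiq P = -1 ->
  uniq h -> (0 < size h)%nat ->
  exists eta : R,
    (1 <= eta)%R /\ (eta <= INR (size h))%R /\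
    Un_cv (fun nu : nat => (INR (countAqh h P nu) / INR (normP P ^ nu)%nat)%R)
          (1 - eta / (INR (normP P) + 1))%R /\
    (h = [:: 0] -> eta = 1%R) /\
    (~~ (P %| Deltah h) -> eta = INR (size h)).
Proof.
move=> oddF P_monic P_irr /chiq_eqN1 P0_nonsqr uniq_h h_gt0.
pose c n := #|odd_val_set P n n 0|.
have c_rec n : ((normP P + 1) * c n + expn (normP P) (odd n))%nat = expn (normP P) n.
  by have := card_odd_val_set P_monic 0 (leqnn n); rewrite subnn add0n.
have [hi hi_h] : exists hi, hi \in h by case: (h) h_gt0 => // hi ? _; exists hi; rewrite mem_head.
have [eta [[eta_ge1 eta_le] [b_cv b_eq]]] := cv_b_density (normP_gt1 P_irr) c_rec
  (fun n => card_bad_set_ge P_monic n hi_h) (card_bad_set_le P_monic ^~ h)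
  (card_bad_set_mono P_monic ^~ h).
exists eta; do 3 split => //.
  apply: Un_cv_ext (CV_minus _ _ _ _ (Un_cv_const 1) b_cv) => n.
  by rewrite countAqh_ratio.
split=> [h0|nD]; last first.
  apply: b_eq => n; apply: card_bad_set_eq => // x y x_h y_h xy.
  by apply: contra nD => Pxy; apply: dvdp_trans Pxy (sub_dvdp_Deltah x_h y_h xy).
rewrite b_eq ?h0 // => n; apply: card_bad_set_eq => // x y.
by rewrite !inE => /eqP-> /eqP->; rewrite eqxx.
Qed.
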